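(* Let $G$ be a graph. Then $\chi_{alg}(G)=1$ if and only if $G$ is the empty graph (has no edges). Hence $\chi_{alg}(G)=1\iff\chi(G)=1$.
   Context: Graphs are finite, loopless, with symmetric edge sets; $K_c$ is the complete graph on $c$ vertices; $\chi(G)$ is the usual chromatic number. For $|I|=n$, $|O|=m$ ($O=\{0,\dots,m-1\}$), $\mathbb F(n,m)$ is the free product of $n$ copies of the cyclic group of order $m$ with generators $u_v$, $\mathbb C[\mathbb F(n,m)]$ its group $*$-algebra, $\omega=e^{2\pi i/m}$, $e_{v,a}=\frac1m\sum_{k=0}^{m-1}(\omega^{-a}u_v)^k$. For graphs $G,H$, the graph homomorphism game has $I=V(G)$, $O=V(H)$, $\lambda(v,w,a,b)=0$ iff ($v=w$, $a\ne b$) or ($(v,w)\in E(G)$, $(a,b)\notin E(H)$); $\mathcal I(G,H)$ is the two-sided $*$-ideal generated by $\{e_{v,a}e_{w,b}:\lambda(v,w,a,b)=0\}$, $\mathcal A(G,H)$ the quotient, and $\chi_{alg}(G)=\min\{c:\mathcal A(G,K_c)\ne0\}$. *)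

From mathcomp Require Import all_boot all_algebra.
From mathcomp Require Import Rstruct.
From mathcomp.real_closed Require Import complex.
From Stdlib Require Import Reals.

Set Implicit Arguments.
Unset Strict Implicit.
Unset Printing Implicit Defensive.
Import GRing.Theory.
Local Open Scope ring_scope.

Definition CC : Type := complex R.

Definition omega (m : nat) : CC :=
  Complex (cos (2 * PI / INR m)%R) (sin (2 * PI / INR m)%R).

(* Free associative unital C-algebra C<x_v : v in I>, elements given as
   formal finite sums of (coefficient, word) pairs; two formal sums
   represent the same element iff all their coefficients agree.       *)
Section FreeAlg.
Variable I : finType.

Definition fpoly : Type := seq (CC * seq I).

Definition fcoef (p : fpoly) (w : seq I) : CC :=
  \sum_(t <- p | t.2 == w) t.1.

Definition feq (p q : fpoly) : Prop := forall w, fcoef p w = fcoef q w.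

Definition fadd (p q : fpoly) : fpoly := p ++ q.
Definition fscale (c : CC) (p : fpoly) : fpoly := [seq (c * t.1, t.2) | t <- p].
Definition fmul (p q : fpoly) : fpoly :=
  [seq (a.1 * b.1, a.2 ++ b.2) | a <- p, b <- q].
Definition fone : fpoly := [:: (1, [::])].
Definition fgen (v : I) : fpoly := [:: (1, [:: v])].
Definition fpow (p : fpoly) (k : nat) : fpoly := iter k (fmul p) fone.
Definition fsum (ps : seq fpoly) : fpoly := flatten ps.

Definition in_ideal (S : fpoly -> Prop) (p : fpoly) : Prop :=
  exists ts : seq (fpoly * fpoly * fpoly),
    (forall t, List.In t ts -> S t.1.2) /\
    feq p (fsum [seq fmul (fmul t.1.1 t.1.2) t.2 | t <- ts]).

End FreeAlg.

(* C[F(n,m)], F(n,m) = free product of n copies of Z/m, presented as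
   C<u_v> / (u_v^m - 1).  Generators u_v := fgen v.                   *)

Definition e_proj (I : finType) (m : nat) (v : I) (a : nat) : fpoly I :=
  fsum [seq fscale ((m%:R)^-1 * ((omega m)^-1) ^+ (a * k)) (fpow (fgen v) k)
       | k <- iota 0 m].

(* Graph homomorphism game G -> K_c: lambda(v,w,a,b) = 0 iff
   (v = w and a <> b) or ((v,w) in E(G) and (a,b) notin E(K_c)),
   where (a,b) in E(K_c) iff a <> b. *)
Definition lambda0 (V : finType) (E : rel V) (c : nat)
    (v w : V) (a b : 'I_c) : bool :=
  ((v == w) && (a != b)) || (E v w && ~~ (a != b)).

(* Generators of I(G,K_c) together with the group relations u_v^c = 1
   of C[F(n,c)]; A(G,K_c) is the free algebra modulo the ideal they generate. *)
Definition rels (V : finType) (E : rel V) (c : nat) (p : fpoly V) : Prop :=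
  (exists v : V, p = fadd (fpow (fgen v) c) (fscale (-1) (fone V))) \/
  (exists (v w : V) (a b : 'I_c),
      lambda0 E v w a b /\ p = fmul (e_proj c v a) (e_proj c w b)).

(* A(G,K_c) <> 0  iff  1 is not in the ideal. *)
Definition A_nonzero (V : finType) (E : rel V) (c : nat) : Prop :=
  ~ in_ideal (rels E c) (fone V).

(* chi_alg(G) = c, with c ranging over c >= 1 (K_c needs c >= 1). *)
Definition is_chi_alg (V : finType) (E : rel V) (c : nat) : Prop :=
  (0 < c)%nat /\ A_nonzero E c /\
  (forall c' : nat, (0 < c')%nat -> (c' < c)%nat -> ~ A_nonzero E c').

Definition proper_coloring (V : finType) (E : rel V) (c : nat) (f : V -> 'I_c) : Prop :=
  forall x y, E x y -> f x != f y.

Definition is_chromatic (V : finType) (E : rel V) (c : nat) : Prop :=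
  (exists f : V -> 'I_c, proper_coloring E f) /\
  (forall c' : nat, (c' < c)%nat -> ~ exists f : V -> 'I_c', proper_coloring E f).

(* The augmentation character u_v |-> 1 (the trivial one-dimensional
   representation of F(n,1)) kills every relation u_v^c - 1.  For c = 1 the
   projection e_{v,0} is the identity, so the generator e_{v,0} e_{w,0} of
   the ideal attached to an edge (v,w) is 1 itself and A(G,K_1) = 0.  If G
   has no edges, the only remaining generators are u_v - 1, which the
   augmentation kills while it sends 1 to 1, so 1 is not in the ideal. *)
From mathcomp Require Import all_boot all_algebra.
From mathcomp Require Import Rstruct.
From mathcomp.real_closed Require Import complex.

Set Implicit Arguments.
Unset Strict Implicit.
Unset Printing Implicit Defensive.
Import GRing.Theory.

Section Augmentation.
Variable I : finType.
Local Open Scope ring_scope.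
Implicit Types (p q : fpoly I) (S : fpoly I -> Prop).

Definition faug p : CC := \sum_(t <- p) t.1.

Lemma faug_fcoef p (s : seq (seq I)) : uniq s -> {subset map snd p <= s} ->
  faug p = \sum_(w <- s) fcoef p w.
Proof.
move=> s_uniq p_s; rewrite /fcoef.
under eq_bigr do rewrite big_mkcond.
rewrite exchange_big; apply: eq_big_seq => t t_p /=.
rewrite -big_mkcond big_const_seq /=.
have -> : count (fun w => t.2 == w) s = count_mem t.2 s.
  by apply: eq_count => w /=; rewrite eq_sym.
by rewrite count_uniq_mem // p_s ?map_f //= addr0.
Qed.

Lemma faug_feq p q : feq p q -> faug p = faug q.
Proof.
move=> pq; set s := undup (map snd (p ++ q)).
have s_uniq : uniq s by apply: undup_uniq.
have s_p : {subset map snd p <= s}.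
  by move=> x; rewrite mem_undup map_cat mem_cat => ->.
have s_q : {subset map snd q <= s}.
  by move=> x; rewrite mem_undup map_cat mem_cat => ->; rewrite orbT.
rewrite (faug_fcoef s_uniq s_p) (faug_fcoef s_uniq s_q).
by apply: eq_bigr => w _; rewrite pq.
Qed.

Lemma faug_add p q : faug (fadd p q) = faug p + faug q.
Proof. by rewrite /faug big_cat. Qed.

Lemma faug_scale c p : faug (fscale c p) = c * faug p.
Proof. by rewrite /faug big_map mulr_sumr. Qed.

Lemma faug_mul p q : faug (fmul p q) = faug p * faug q.
Proof.
rewrite /faug big_allpairs_dep /= mulr_suml.
by apply: eq_bigr => a _; rewrite mulr_sumr.
Qed.

Lemma faug_one : faug (fone I) = 1.
Proof. by rewrite /faug big_seq1. Qed.

Lemma faug_gen v : faug (fgen v) = 1.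
Proof. by rewrite /faug big_seq1. Qed.

Lemma faug_pow p k : faug (fpow p k) = faug p ^+ k.
Proof.
elim: k => [|k IHk]; first by rewrite faug_one expr0.
by rewrite /fpow iterS -/(fpow p k) faug_mul IHk exprS.
Qed.

Lemma faug_sum ps : faug (fsum ps) = \sum_(p <- ps) faug p.
Proof.
elim: ps => [|p ps IHps]; first by rewrite /faug /fsum !big_nil.
by rewrite /fsum /= -/(fsum ps) -/(fadd p _) faug_add IHps big_cons.
Qed.

Lemma faug_group_rel (c : nat) v :
  faug (fadd (fpow (fgen v) c) (fscale (-1) (fone I))) = 0.
Proof.
by rewrite faug_add faug_scale faug_pow faug_gen faug_one expr1n mulN1r subrr.
Qed.

Lemma faug_in_ideal S p :
  (forall q, S q -> faug q = 0) -> in_ideal S p -> faug p = 0.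
Proof.
move=> faugS [ts [ts_S /faug_feq ->]]; elim: ts ts_S => [|t ts IHts] ts_S.
  by rewrite faug_sum big_nil.
rewrite /= /fsum /= -/(fsum _) -/(fadd _ _) faug_add !faug_mul.
rewrite [faug t.1.2]faugS ?IHts => [|u ts_u|].
- by rewrite mulr0 mul0r addr0.
- by apply: ts_S; right.
- by apply: ts_S; left.
Qed.

Lemma in_ideal_gen S p : S p -> in_ideal S p.
Proof.
exists [:: (fone I, p, fone I)]; split=> [t [<- //|[]] | w].
rewrite /fcoef /fsum /fmul /= !cats0 flatten_map1 !big_map.
by apply: eq_big => [t | t _] /=; rewrite ?cats0 ?mul1r ?mulr1.
Qed.

End Augmentation.

Lemma e_proj1 (I : finType) (v : I) (a : 'I_1) : e_proj 1 v a = fone I.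
Proof. by rewrite (ord1 a) /e_proj /= invr1 expr0 !mulr1. Qed.

Lemma lambda0_1 (V : finType) (E : rel V) v w (a b : 'I_1) :
  lambda0 E v w a b = E v w.
Proof. by rewrite (ord1 a) (ord1 b) /lambda0 eqxx /= andbF andbT. Qed.

Lemma A_nonzero1 (V : finType) (E : rel V) :
  A_nonzero E 1 <-> (forall x y : V, ~~ E x y).
Proof.
split=> [E1 x y | E0].
  apply/negP => Exy; apply/E1/in_ideal_gen; right.
  exists x, y, ord0, ord0; split; first by rewrite lambda0_1.
  by rewrite !e_proj1 /fmul /= mulr1.
move=> /faug_in_ideal faug1; have /eqP := oner_neq0 CC; apply.
rewrite -(faug_one V) faug1 // => q [[v ->] | [v [w [a [b [vw_ab _]]]]]].
  exact: faug_group_rel.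
by move: vw_ab; rewrite lambda0_1 (negbTE (E0 v w)).
Qed.

Lemma is_chi_alg1 (V : finType) (E : rel V) :
  is_chi_alg E 1 <-> A_nonzero E 1.
Proof. by split=> [[_ []] // | E1]; do 2!split=> //; case. Qed.

Lemma proper_coloring1 (V : finType) (E : rel V) (f : V -> 'I_1) :
  proper_coloring E f <-> (forall x y : V, ~~ E x y).
Proof.
split=> [f_proper x y | E0 x y]; last by rewrite (negbTE (E0 x y)).
by apply/negP => /f_proper; rewrite (ord1 (f x)) (ord1 (f y)) eqxx.
Qed.

Lemma is_chromatic1 (V : finType) (E : rel V) : 0 < #|V| ->
  is_chromatic E 1 <-> (forall x y : V, ~~ E x y).
Proof.
case/card_gt0P => x0 _; split=> [[[f /proper_coloring1 //]] | E0].
split=> [|[|//] _ [f _]]; last by case: (f x0).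
by exists (fun=> ord0); apply/proper_coloring1.
Qed.

Theorem mainTheorem15 (V : finType) (E : rel V)
    (Esym : symmetric E) (Eirr : irreflexive E) :
  (is_chi_alg E 1 <-> (forall x y : V, ~~ E x y)) /\
  ((0 < #|V|)%nat -> (is_chi_alg E 1 <-> is_chromatic E 1)).
Proof.
have chi_alg1 : is_chi_alg E 1 <-> (forall x y : V, ~~ E x y).
  by rewrite is_chi_alg1 A_nonzero1.
by split=> // V_gt0; rewrite chi_alg1 is_chromatic1.
Qed.
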